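(* Let $k:\mathcal{Z}\times\mathcal{Z}\to\mathbb{R}$ be a positive definite kernel with polynomial eigendecay on a $d$-dimensional hypercube $\mathcal{Z}$ of side length $\rho_{\mathcal{Z}}$, and let $\lambda>0$. Then the maximum information gain satisfies $$\Gamma_{k,\lambda}(T)=\mathcal{O}\!\left(T^{\frac1{\tilde p}}(\log T)^{1-\frac1{\tilde p}}\rho_{\mathcal{Z}}^{\frac{\alpha}{\tilde p}}\right),$$ with hidden constants depending on the kernel constants and $\lambda$ but not on $T$ or $\rho_{\mathcal{Z}}$.
   Context: $k$ is continuous with $k(z,z)\le1$. Let $\{(\sigma_m,\phi_m)\}_{m\ge1}$ be the Mercer eigenvalue–eigenfunction pairs of $k$ on $\mathcal{Z}$ with respect to Lebesgue measure, eigenvalues decreasing, so that $k(z,z')=\sum_m\sigma_m\phi_m(z)\phi_m(z')$. Polynomial eigendecay means: there are $C_p,\alpha>0$ and $p>1$ with $\sigma_m\le C_pm^{-p}\rho_{\mathcal{Z}}^{\alpha}$ for all $m\in\mathbb{N}$, and there is $\eta\ge0$ such that $m^{-p\eta}\phi_m(z)$ is uniformly bounded over all $m$ and $z$. Write $\tilde p=p(1-2\eta)$. The maximum information gain is $\Gamma_{k,\lambda}(t)=\max_{Z^t\subset\mathcal{Z},|Z^t|=t}\frac12\log\det(I+\lambda^{-2}K_{Z^t})$, where $K_{Z^t}=[k(z,z')]_{z,z'\in Z^t}$. *)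

From HB Require Import structures.
From mathcomp Require Import all_boot all_order all_algebra.
From mathcomp Require Import all_classical all_reals all_analysis.
Set Implicit Arguments. Unset Strict Implicit. Unset Printing Implicit Defensive.
Import Order.TTheory GRing.Theory Num.Theory.
Import numFieldNormedType.Exports.
Local Open Scope classical_set_scope.
Local Open Scope ring_scope.

Section Defs.
Variables (R : realType) (d : nat).

Notation pt := 'rV[R]_d.

Definition hypercube (a : pt) (rho : R) : set pt :=
  [set z | forall i : 'I_d, a 0 i <= z 0 i <= a 0 i + rho].

Definition rv_upd (x : pt) (i : 'I_d) (t : R) : pt :=
  \row_j (if j == i then t else x 0 j).

Fixpoint iter_int (a : pt) (rho : R) (s : seq 'I_d) (f : pt -> R) (x : pt) : R :=
  match s with
  | [::] => f x
  | i :: s' => Rintegral lebesgue_measure `[a 0 i, a 0 i + rho]%classic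
                 (fun t => iter_int a rho s' f (rv_upd x i t))
  end.

(* Lebesgue integral over the hypercube (as an iterated integral; all
   integrands used below are continuous on the cube, so this agrees with the
   d-dimensional Lebesgue integral by Fubini) *)
Definition cube_integral (a : pt) (rho : R) (f : pt -> R) : R :=
  iter_int a rho (enum 'I_d) f a.

Definition pos_def_kernel (Z : set pt) (k : pt -> pt -> R) : Prop :=
  (forall z z', Z z -> Z z' -> k z z' = k z' z) /\
  (forall (n : nat) (zs : 'I_n -> pt) (c : 'I_n -> R), (forall i, Z (zs i)) ->
     0 <= \sum_(i < n) \sum_(j < n) c i * c j * k (zs i) (zs j)).

Definition kernel_continuous (Z : set pt) (k : pt -> pt -> R) : Prop :=
  {within [set zz : pt * pt | Z zz.1 /\ Z zz.2],
     continuous (fun zz : pt * pt => k zz.1 zz.2)}.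

(* (sigma m, phi m), m = 0,1,2,... (paper index m+1) are the Mercer
   eigenvalue/eigenfunction pairs of k on the hypercube w.r.t. Lebesgue measure *)
Definition mercer_pairs (a : pt) (rho : R) (k : pt -> pt -> R)
    (sigma : nat -> R) (phi : nat -> pt -> R) : Prop :=
  let Z := hypercube a rho in
  [/\ (forall m, 0 <= sigma m) /\ (forall m, sigma m.+1 <= sigma m),
      (forall m, {within Z, continuous (phi m)}),
      (forall m n, cube_integral a rho (fun z => phi m z * phi n z)
                   = (m == n)%:R),
      (forall m z, Z z ->
         cube_integral a rho (fun z' => k z z' * phi m z') = sigma m * phi m z)
    & (forall z z', Z z -> Z z' ->
         (fun n => \sum_(m < n) sigma m * phi m z * phi m z') @ \oo --> k z z')].

Definition poly_eigendecay (a : pt) (rho : R) (sigma : nat -> R)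
    (phi : nat -> pt -> R) (Cp alpha p eta B : R) : Prop :=
  (forall m, sigma m <= Cp * (m.+1)%:R `^ (- p) * rho `^ alpha) /\
  (forall m z, hypercube a rho z -> `|(m.+1)%:R `^ (- (p * eta)) * phi m z| <= B).

Definition gram (k : pt -> pt -> R) (t : nat) (zs : 'I_t -> pt) : 'M[R]_t :=
  \matrix_(i, j) k (zs i) (zs j).

Definition info_gain (k : pt -> pt -> R) (lambda : R) (t : nat) (zs : 'I_t -> pt) : R :=
  2^-1 * ln (\det (1%:M + lambda ^- 2 *: gram k zs)).

Definition max_info_gain (Z : set pt) (k : pt -> pt -> R) (lambda : R) (t : nat) : R :=
  sup [set info_gain k lambda zs | zs in
        [set zs : 'I_t -> pt | injective zs /\ forall i, Z (zs i)]].

End Defs.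

(* Expanding k in its Mercer series, the regularised Gram matrix
   [I + lambda^-2 K] is the limit of [I + lambda^-2 \sum_(m < N) sigma_m r_m^T r_m]
   with [r_m = (phi_m z_i)_i].  Adding these rank-one terms one at a time (matrix
   determinant lemma, and [M^-1 <= I] for [M >= I]) gives
   [log det (I + lambda^-2 K) <= \sum_m log (1 + u_m)] with
   [u_m = lambda^-2 sigma_m \sum_i phi_m (z_i)^2].
   Since [sigma_m phi_m(z)^2 <= k z z <= 1], each term is at most [2 log T]; by the
   eigendecay, [u_m <= lambda^-2 C_p B^2 T rho^alpha (m+1)^-p~].  Using the first bound
   below a cut-off [D ~ (T rho^alpha / log T)^(1/p~)] and summing the second beyond it
   yields [O (T^(1/p~) (log T)^(1 - 1/p~) rho^(alpha/p~))]. *)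

From mathcomp Require Import all_boot all_order all_algebra.
From mathcomp Require Import all_classical all_reals all_analysis.
From mathcomp Require Import perm ring lra.
Set Implicit Arguments. Unset Strict Implicit. Unset Printing Implicit Defensive.
Import Order.TTheory GRing.Theory Num.Theory.
Import numFieldNormedType.Exports.
Local Open Scope classical_set_scope.
Local Open Scope ring_scope.

Section Rank1Updates.
Variable R : realFieldType.

Lemma det1D_col_row n (c : 'cV[R]_n) (r : 'rV[R]_n) :
  \det (1%:M + c *m r) = 1 + (r *m c) 0 0.
Proof.
pose X := block_mx (1%:M : 'M[R]_n) c (- r) (1%:M : 'M[R]_1).
have XE1 : X = block_mx 1%:M 0 (- r) 1%:M *m block_mx 1%:M c 0 (1%:M + r *m c).
  rewrite mulmx_block ?mul1mx ?mul0mx ?mulmx0 ?addr0 ?add0r ?mulmx1 ?mulNmx.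
  by rewrite addrCA addNr addr0.
have XE2 : X = block_mx (1%:M + c *m r) c 0 1%:M *m block_mx 1%:M 0 (- r) 1%:M.
  rewrite mulmx_block ?mul1mx ?mul0mx ?mulmx0 ?addr0 ?add0r ?mulmx1 ?mulmxN.
  by rewrite addrK.
have := congr1 determinant XE1; rewrite {1}XE2 !det_mulmx.
rewrite !det_ublock !det_lblock !det1 !mul1r !mulr1 => ->.
by rewrite det_mx11 !mxE eqxx.
Qed.

Lemma mulmx_trmx_ge0 n (y : 'rV[R]_n) : 0 <= (y *m y^T) 0 0.
Proof. by rewrite mxE; apply: sumr_ge0 => i _; rewrite mxE -expr2 sqr_ge0. Qed.

Definition psdmx n (P : 'M[R]_n) := forall x : 'rV[R]_n, 0 <= (x *m P *m x^T) 0 0.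

Lemma psdmxD n (A B : 'M[R]_n) : psdmx A -> psdmx B -> psdmx (A + B).
Proof. by move=> A0 B0 x; rewrite mulmxDr mulmxDl mxE addr_ge0. Qed.

Lemma psdmx_rank1 n (a : R) (r : 'rV[R]_n) : 0 <= a -> psdmx (a *: (r^T *m r)).
Proof.
move=> a0 x; rewrite -scalemxAr -scalemxAl mxE mulr_ge0 // !mulmxA.
have -> : x *m r^T *m r *m x^T = x *m r^T *m (x *m r^T)^T.
  by rewrite -mulmxA trmx_mul trmxK.
exact: mulmx_trmx_ge0.
Qed.

Lemma psdmx_sum_rank1 n (a : nat -> R) (r : nat -> 'rV[R]_n) N :
  (forall m, 0 <= a m) -> psdmx (\sum_(m < N) a m *: ((r m)^T *m r m)).
Proof.
move=> a0; apply: (big_ind (@psdmx n)) => [x|A B|m _]; last exact: psdmx_rank1.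
- by rewrite mulmx0 mul0mx mxE.
- exact: psdmxD.
Qed.

Lemma trmx_sum_rank1 n (a : nat -> R) (r : nat -> 'rV[R]_n) N :
  (\sum_(m < N) a m *: ((r m)^T *m r m))^T = \sum_(m < N) a m *: ((r m)^T *m r m).
Proof.
rewrite linear_sum; apply: eq_bigr => m _.
by rewrite linearZ /= trmx_mul trmxK.
Qed.

(* With [w := r M^-1] and [M = 1 + P], the quadratic form [r M^-1 r^T] is
   [w w^T + w P w^T], while [r r^T] exceeds it by [w P w^T + (w P) (w P)^T]. *)
Lemma quad_invmx_bounds n (M : 'M[R]_n) (r : 'rV[R]_n) :
  M^T = M -> psdmx (M - 1%:M) -> M \in unitmx ->
  0 <= (r *m invmx M *m r^T) 0 0 <= (r *m r^T) 0 0.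
Proof.
move=> MT Ppsd Mu; set P := M - 1%:M in Ppsd.
have PT : P^T = P by rewrite /P linearB /= MT trmx1.
have MP : M = 1%:M + P by rewrite /P addrC subrK.
clearbody P.
pose w := r *m invmx M.
have rw : r = w *m M by rewrite /w mulmxKV.
have rT : r^T = M *m w^T by rewrite rw trmx_mul MT.
have qE : r *m invmx M *m r^T = w *m w^T + w *m P *m w^T.
  by rewrite -/w rT MP mulmxDl mul1mx mulmxDr mulmxA.
clearbody w.
have rrE : r *m r^T = r *m invmx M *m r^T + (w *m P *m w^T + (w *m P) *m (w *m P)^T).
  rewrite qE {1}rw rT trmx_mul PT MP !mulmxDl !mulmxDr !mul1mx !mulmx1 !mulmxA.
  by rewrite !mulmxDl !addrA.
have addE (A B : 'M[R]_1) : (A + B) 0 0 = A 0 0 + B 0 0 by rewrite mxE.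
rewrite rrE qE !addE addr_ge0 ?mulmx_trmx_ge0 //=.
by rewrite lerDl addr_ge0 ?mulmx_trmx_ge0.
Qed.

Lemma det_addmx_rank1 n (M : 'M[R]_n) (a : R) (r : 'rV[R]_n) : M \in unitmx ->
  \det (M + a *: (r^T *m r)) = \det M * (1 + a * (r *m invmx M *m r^T) 0 0).
Proof.
move=> Mu.
have -> : M + a *: (r^T *m r) = M *m (1%:M + (invmx M *m (a *: r^T)) *m r).
  by rewrite mulmxDr mulmx1 !mulmxA mulmxV // mul1mx -scalemxAl.
by rewrite det_mulmx det1D_col_row -scalemxAr -scalemxAr mxE mulmxA.
Qed.

Lemma det_1D_sum_rank1_le n (a : nat -> R) (r : nat -> 'rV[R]_n) N :
  (forall m, 0 <= a m) ->
  0 < \det (1%:M + \sum_(m < N) a m *: ((r m)^T *m r m))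
    <= \prod_(m < N) (1 + a m * (r m *m (r m)^T) 0 0).
Proof.
move=> a0; elim: N => [|N /andP[detM_gt0 detM_le]].
  by rewrite !big_ord0 addr0 det1 ltr01 lexx.
set M := 1%:M + _ in detM_gt0 detM_le *.
have Mu : M \in unitmx by rewrite unitmxE unitfE gt_eqF.
have MT : M^T = M by rewrite /M linearD /= trmx1 trmx_sum_rank1.
have Mpsd : psdmx (M - 1%:M) by rewrite /M addrC addKr; exact: psdmx_sum_rank1.
have /andP[q_ge0 q_le] := quad_invmx_bounds (r N) MT Mpsd Mu.
rewrite big_ord_recr /= addrA -/M det_addmx_rank1 // big_ord_recr /=.
have q1_gt0 : 0 < 1 + a N * (r N *m invmx M *m (r N)^T) 0 0.
  by rewrite ltr_pwDl ?mulr_ge0.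
rewrite mulr_gt0 //=; apply: ler_pM => //; [exact: ltW | exact: ltW |].
by rewrite lerD2l ler_wpM2l.
Qed.

End Rank1Updates.

Section PowerSums.
Variable R : realType.

Lemma powR_expR (x r : R) : 0 < x -> x `^ r = expR (r * ln x).
Proof. by move=> x0; rewrite /powR gt_eqF. Qed.

Lemma inv_addr1_le_lnB (x : R) : 0 < x -> (x + 1)^-1 <= ln (x + 1) - ln x.
Proof.
move=> x0; have x1_gt0 : 0 < x + 1 by rewrite ltr_wpDr.
have : ln (1 - (x + 1)^-1) <= - (x + 1)^-1.
  by rewrite le_ln1Dx // ltrN2 invf_lt1 // ltrDr.
have -> : 1 - (x + 1)^-1 = x / (x + 1) by field; rewrite gt_eqF.
by rewrite ln_div ?posrE // lerNr opprB.
Qed.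

(* [x^-q] exceeds [(x+1)^-q] by the factor [exp (q (ln (x+1) - ln x)) >= 1 + q/(x+1)]. *)
Lemma powR_succ_le_telescope (q x : R) : 0 < q -> 0 < x ->
  (x + 1) `^ (- (q + 1)) <= (x `^ (- q) - (x + 1) `^ (- q)) / q.
Proof.
move=> q0 x0; have x1_gt0 : 0 < x + 1 by rewrite ltr_wpDr.
set del := ln (x + 1) - ln x.
have xqE : x `^ (- q) = (x + 1) `^ (- q) * expR (q * del).
  by rewrite !powR_expR // -expRD; congr expR; rewrite /del; ring.
have x1E : (x + 1) `^ (- (q + 1)) = (x + 1) `^ (- q) / (x + 1).
  rewrite !powR_expR // -[in X in _ / X](lnK (x := x + 1)) ?posrE //.
  by rewrite -expRN -expRD; congr expR; ring.
rewrite x1E xqE -[X in _ * _ - X]mulr1 -mulrBr -mulrA ler_wpM2l ?powR_ge0 //.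
rewrite ler_pdivlMr // mulrC.
apply: le_trans (_ : q * del <= _); last by rewrite lerBrDr addrC expR_ge1Dx.
by rewrite ler_pM2l // inv_addr1_le_lnB.
Qed.

Lemma sum_powR_tail_le (q : R) (D N : nat) : 0 < q -> (0 < D)%N ->
  \sum_(D <= m < N) (m.+1)%:R `^ (- (q + 1)) <= D%:R `^ (- q) / q.
Proof.
move=> q0 D0; have [ND|DN] := leqP N D.
  by rewrite big_geq // divr_ge0 ?powR_ge0 // ltW.
pose f (m : nat) := - (m%:R `^ (- q) / q).
apply: le_trans (_ : \sum_(D <= m < N) (f m.+1 - f m) <= _).
  apply: ler_sum_nat => m /andP[Dm _].
  rewrite /f opprK [X in _ <= X]addrC -mulrBl -natr1.
  by apply: powR_succ_le_telescope; rewrite // ltr0n (leq_trans D0 Dm).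
rewrite telescope_sumr ?(ltnW DN) // /f opprK gerDr oppr_le0.
by rewrite divr_ge0 ?powR_ge0 // ltW.
Qed.

Lemma sum_powR_le (q : R) (N : nat) : 0 < q ->
  \sum_(m < N) (m.+1)%:R `^ (- (q + 1)) <= 1 + q^-1.
Proof.
move=> q0; case: N => [|N]; first by rewrite big_ord0 addr_ge0 ?invr_ge0 ?ltW.
rewrite -(big_mkord xpredT (fun m => (m.+1)%:R `^ (- (q + 1)))) big_ltn //= powR1.
by rewrite lerD2l; apply: le_trans (sum_powR_tail_le _ q0 _) _; rewrite ?powR1 ?mul1r.
Qed.

End PowerSums.

Section LogSumBounds.
Variables (R : realType) (q A : R) (u : nat -> R).
Hypotheses (q_gt0 : 0 < q) (u_ge0 : forall m, 0 <= u m)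
  (u_decay : forall m, u m <= A * (m.+1)%:R `^ (- (q + 1))).

Let A_ge0 : 0 <= A.
Proof. by have := le_trans (u_ge0 0) (u_decay 0); rewrite powR1 mulr1. Qed.

Let ln1D_le m : ln (1 + u m) <= A * (m.+1)%:R `^ (- (q + 1)).
Proof.
by apply: le_trans (u_decay m); rewrite le_ln1Dx // (lt_le_trans _ (u_ge0 m)) ?ltrN10.
Qed.

Lemma sum_ln1D_le_decay N : \sum_(m < N) ln (1 + u m) <= A * (1 + q^-1).
Proof.
apply: le_trans (_ : \sum_(m < N) A * (m.+1)%:R `^ (- (q + 1)) <= _).
  by apply: ler_sum => m _; exact: ln1D_le.
by rewrite -mulr_sumr ler_wpM2l // sum_powR_le.
Qed.

Lemma sum_ln1D_le_split (L : R) (D N : nat) : (0 < D)%N ->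
  (forall m, ln (1 + u m) <= L) ->
  \sum_(m < N) ln (1 + u m) <= D%:R * L + A * (D%:R `^ (- q) / q).
Proof.
move=> D_gt0 ln1D_leL.
have ln1D_ge0 m : 0 <= ln (1 + u m) by rewrite ln_ge0 // lerDl.
rewrite -(big_mkord xpredT (fun m => ln (1 + u m))).
apply: le_trans (_ : \sum_(0 <= m < D + N) ln (1 + u m) <= _).
  by rewrite (big_cat_nat (leq0n N) (leq_addl D N)) /= lerDl sumr_ge0.
rewrite (big_cat_nat (leq0n D) (leq_addr N D)) /=; apply: lerD.
  apply: le_trans (_ : \sum_(0 <= m < D) L <= _); first exact: ler_sum_nat.
  by rewrite sumr_const_nat subn0 mulr_natl.
apply: le_trans (_ : \sum_(D <= m < D + N) A * (m.+1)%:R `^ (- (q + 1)) <= _).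
  by apply: ler_sum_nat => m _; exact: ln1D_le.
by rewrite -mulr_sumr ler_wpM2l // sum_powR_tail_le.
Qed.

(* Cut the sum at [D ~ (A/L)^(1/(q+1))]: below [D] each term is at most [L],
   beyond [D] the decay bound sums to [A D^-q / q], and both parts are
   [O (A^(1/(q+1)) L^(1-1/(q+1)))].  When [A <= L] no cut is needed. *)
Lemma sum_ln1D_le_balanced (L : R) N : 0 < L -> (forall m, ln (1 + u m) <= L) ->
  \sum_(m < N) ln (1 + u m)
    <= (2 + q^-1) * (A `^ (1 / (q + 1)) * L `^ (1 - 1 / (q + 1))).
Proof.
move=> L_gt0 ln1D_leL.
set Y := A `^ _ * _.
have Y_ge0 : 0 <= Y by rewrite mulr_ge0 ?powR_ge0.
have q1_gt0 : 0 < q + 1 by rewrite ltr_wpDr.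
have [AL|LA] := leP A L.
  have AY : A <= Y.
    have -> : A = A `^ (1 / (q + 1)) * A `^ (1 - 1 / (q + 1)).
      rewrite -powRD; last by rewrite addrC subrK oner_eq0.
      by rewrite addrC subrK powRr1.
    rewrite ler_wpM2l ?powR_ge0 // ge0_ler_powR ?nnegrE ?(ltW L_gt0) //.
    by rewrite subr_ge0 ler_pdivrMr // mul1r lerDr ltW.
  apply: le_trans (sum_ln1D_le_decay N) _.
  by rewrite mulrC ler_pM // ?addr_ge0 ?invr_ge0 ?(ltW q_gt0) // lerD2r ler1n.
have A_gt0 : 0 < A by apply: lt_trans LA.
set e := (ln A - ln L) / (q + 1).
have e_ge0 : 0 <= e by rewrite divr_ge0 ?subr_ge0 ?ler_ln ?posrE ?ltW.
set x := expR e.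
have x_ge1 : 1 <= x by rewrite -expR0 ler_expR.
have xLE : x * L = Y.
  rewrite -[L in x * L]lnK ?posrE // -expRD /Y !powR_expR //.
  by rewrite -expRD; congr expR; rewrite /e; field; rewrite gt_eqF.
have AxE : A * expR (- q * e) = Y.
  rewrite -[A in A * _]lnK ?posrE // -expRD /Y !powR_expR //.
  by rewrite -expRD; congr expR; rewrite /e; field; rewrite gt_eqF.
pose D := (Num.truncn x).+1.
have xD : x <= D%:R := ltW (truncnS_gt x).
have D2x : D%:R <= 2 * x.
  by rewrite /D -natr1 mulrDl mul1r lerD ?truncn_le ?(le_trans ler01 x_ge1).
have D_gt0 : 0 < D%:R :> R by rewrite ltr0n.
have DqE : D%:R `^ (- q) <= expR (- q * e).
  rewrite powR_expR // ler_expR !mulNr lerN2 ler_pM2l // -[e]expRK.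
  by rewrite ler_ln ?posrE ?expR_gt0.
apply: le_trans (@sum_ln1D_le_split L D N (ltn0Sn _) ln1D_leL) _.
rewrite mulrDl; apply: lerD.
  by rewrite -xLE mulrA ler_wpM2r ?(ltW L_gt0).
rewrite -AxE mulrA mulrC ler_wpM2l ?invr_ge0 ?(ltW q_gt0) //.
by rewrite ler_wpM2l.
Qed.

End LogSumBounds.

Section MercerExpansion.
Variable R : realType.

Lemma cvg_det T (F : set_system T) {FF : Filter F} n (A : T -> 'M[R]_n) (B : 'M[R]_n) :
  (forall i j, (fun t => A t i j) @ F --> B i j) -> (fun t => \det (A t)) @ F --> \det B.
Proof.
move=> AB; apply: (cvg_big (op := +%R)) => //; first exact: add_continuous.
move=> s _; apply: cvgM; first exact: cvg_cst.
have := @cvg_big R _ *%R 1 xpredT (@mul_continuous R) T F (index_enum 'I_n)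
  (fun i t => A t i (s i)) (fun i => B i (s i)) FF (fun i _ => AB i (s i)).
exact.
Qed.

Lemma mercer_term_le_diag (P : Type) (k : P -> P -> R) (sigma : nat -> R)
    (phi : nat -> P -> R) (z : P) m :
  (forall m, 0 <= sigma m) ->
  (fun n => \sum_(m < n) sigma m * phi m z * phi m z) @ \oo --> k z z ->
  sigma m * phi m z ^+ 2 <= k z z.
Proof.
move=> sigma_ge0 /(ler_cvg_to (cvg_cst (sigma m * phi m z ^+ 2))); apply.
exists m.+1 => // n /= mn; rewrite (bigD1 (Ordinal mn)) //= -mulrA -expr2 lerDl.
by apply: sumr_ge0 => j _; rewrite -mulrA -expr2 mulr_ge0 ?sqr_ge0.
Qed.

Lemma info_gain_le_sum_ln d T (k : 'rV[R]_d -> 'rV[R]_d -> R) (sigma : nat -> R)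
    (phi : nat -> 'rV[R]_d -> R) (lambda S : R) (zs : 'I_T -> 'rV[R]_d) :
  (forall m, 0 <= sigma m) ->
  (forall i j, (fun n => \sum_(m < n) sigma m * phi m (zs i) * phi m (zs j))
                 @ \oo --> k (zs i) (zs j)) ->
  (forall N, \sum_(m < N) ln (1 + lambda ^- 2 * sigma m * \sum_(i < T) phi m (zs i) ^+ 2)
               <= S) ->
  info_gain k lambda zs <= 2^-1 * S.
Proof.
move=> sigma_ge0 mercer sumS.
pose a m := lambda ^- 2 * sigma m.
pose r m := \row_(i < T) phi m (zs i).
pose G N := 1%:M + \sum_(m < N) a m *: ((r m)^T *m r m).
have a_ge0 m : 0 <= a m by rewrite mulr_ge0 ?invr_ge0 ?sqr_ge0.
have S_ge0 : 0 <= S by have := sumS 0%N; rewrite big_ord0.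
have normE m : a m * (r m *m (r m)^T) 0 0
    = lambda ^- 2 * sigma m * \sum_(i < T) phi m (zs i) ^+ 2.
  by rewrite mxE /a; congr (_ * _); apply: eq_bigr => i _; rewrite !mxE expr2.
have term_gt0 m : 0 < 1 + a m * (r m *m (r m)^T) 0 0.
  by rewrite ltr_pwDl // mulr_ge0 ?mulmx_trmx_ge0.
have detG_le N : \det (G N) <= expR S.
  have /andP[_ detG_le] := det_1D_sum_rank1_le r N a_ge0.
  apply: le_trans detG_le (le_trans _ (_ : expR (\sum_(m < N) _) <= _)); last first.
    by rewrite ler_expR; exact: sumS.
  rewrite expR_sum; apply: ler_prod => m _.
  by rewrite -normE lnK ?posrE // lexx ltW.
have GE N i j : G N i j = (1%:M : 'M[R]_T) i j
    + lambda ^- 2 * \sum_(m < N) sigma m * phi m (zs i) * phi m (zs j).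
  rewrite [LHS]mxE summxE mulr_sumr; congr (_ + _); apply: eq_bigr => m _.
  by rewrite !mxE big_ord1 !mxE /a; ring.
have detG_cvg : (fun N => \det (G N)) @ \oo --> \det (1%:M + lambda ^- 2 *: gram k zs).
  apply: cvg_det => i j; under eq_cvg do rewrite GE.
  by rewrite !mxE; apply: cvgD; [exact: cvg_cst | apply: cvgMr; exact: mercer].
have det_le : \det (1%:M + lambda ^- 2 *: gram k zs) <= expR S.
  by apply: (ler_cvg_to detG_cvg (cvg_cst _)); exact: nearW.
rewrite /info_gain ler_pM2l ?invr_gt0 ?ltr0n //.
have [det_le0|det_gt0] := leP (\det (1%:M + lambda ^- 2 *: gram k zs)) 0.
  by rewrite ln0.
by rewrite -ler_expR lnK ?posrE.
Qed.

Lemma max_info_gain_le d (Z : set 'rV[R]_d) (k : 'rV[R]_d -> 'rV[R]_d -> R)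
    (lambda : R) t (b : R) : 0 <= b ->
  (forall zs : 'I_t -> 'rV[R]_d, (forall i, Z (zs i)) -> info_gain k lambda zs <= b) ->
  max_info_gain Z k lambda t <= b.
Proof.
move=> b_ge0 info_le; rewrite /max_info_gain.
set E := [set _ | _ in _].
have [->|/set0P E_n0] := eqVneq E set0; first by rewrite sup0.
by apply: ge_sup E_n0 _ => _ [zs [_ Zzs] <-]; exact: info_le.
Qed.

End MercerExpansion.

Section PolynomialEigendecay.
Variable R : realType.

Lemma poly_eigendecay_term_le d (a : 'rV[R]_d) (rho : R) (sigma : nat -> R)
    (phi : nat -> 'rV[R]_d -> R) (Cp alpha p eta B : R) m z :
  (forall m, 0 <= sigma m) -> poly_eigendecay a rho sigma phi Cp alpha p eta B ->
  hypercube a rho z ->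
  sigma m * phi m z ^+ 2
    <= Cp * B ^+ 2 * rho `^ alpha * (m.+1)%:R `^ (- (p * (1 - 2 * eta))).
Proof.
move=> sigma_ge0 [sigma_le phi_le] Zz.
set w : R := (m.+1)%:R; have w_gt0 : 0 < w by rewrite ltr0n.
set e := w `^ (p * eta); have e_gt0 : 0 < e by rewrite powR_gt0.
have phi2_le : phi m z ^+ 2 <= e ^+ 2 * B ^+ 2.
  have := phi_le m z Zz; rewrite -/w powRN -/e => phi_leB.
  have -> : phi m z ^+ 2 = e ^+ 2 * `|e^-1 * phi m z| ^+ 2.
    by rewrite real_normK ?num_real //; field; rewrite gt_eqF.
  by rewrite ler_wpM2l ?sqr_ge0 // !expr2 ler_pM.
apply: le_trans (ler_pM (sigma_ge0 m) (sqr_ge0 _) (sigma_le m) phi2_le) _.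
have -> : w `^ (- (p * (1 - 2 * eta))) = w `^ (- p) * e ^+ 2.
  have pE : - (p * (1 - 2 * eta)) = - p + (p * eta + p * eta) by ring.
  by rewrite pE expr2 /e -!powRD ?(gt_eqF w_gt0) ?implybT.
rewrite -/w; lra.
Qed.

Lemma ln1DM_le_twice_ln (c t : R) : 0 <= c -> 1 + c <= t -> ln (1 + c * t) <= 2 * ln t.
Proof.
move=> c_ge0 ct; have t_ge1 : 1 <= t by apply: le_trans ct; rewrite lerDl.
have t_gt0 : 0 < t by apply: lt_le_trans t_ge1.
rewrite mulr_natl -lnXn // ler_ln ?posrE ?exprn_gt0 //; last first.
  by rewrite ltr_pwDl // mulr_ge0 // ltW.
apply: le_trans (_ : (1 + c) * t <= _); last by rewrite expr2 ler_wpM2r // ltW.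
by rewrite mulrDl mul1r lerD2r.
Qed.

End PolynomialEigendecay.

Section HypercubeKernel.
Variables (R : realType) (d : nat) (a : 'rV[R]_d) (rho : R).
Variables (k : 'rV[R]_d -> 'rV[R]_d -> R) (sigma : nat -> R) (phi : nat -> 'rV[R]_d -> R).
Variables (Cp alpha p eta B : R).
Hypotheses (sigma_ge0 : forall m, 0 <= sigma m)
  (mercer : forall z z', hypercube a rho z -> hypercube a rho z' ->
     (fun n => \sum_(m < n) sigma m * phi m z * phi m z') @ \oo --> k z z')
  (k_le1 : forall z, hypercube a rho z -> k z z <= 1)
  (decay : poly_eigendecay a rho sigma phi Cp alpha p eta B).

Lemma info_gain_le_powR (lambda q : R) T (zs : 'I_T -> 'rV[R]_d) :
  0 < q -> p * (1 - 2 * eta) = q + 1 -> 1 + lambda ^- 2 < T%:R ->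
  (forall i, hypercube a rho (zs i)) ->
  info_gain k lambda zs <= 2^-1 * ((2 + q^-1) *
    ((lambda ^- 2 * (Cp * B ^+ 2) * T%:R * rho `^ alpha) `^ (1 / (q + 1))
     * (2 * ln T%:R) `^ (1 - 1 / (q + 1)))).
Proof.
move=> q_gt0 qP T_gt Zzs; set L0 := lambda ^- 2.
have L0_ge0 : 0 <= L0 by rewrite invr_ge0 sqr_ge0.
have lnT_gt0 : 0 < ln (T%:R : R).
  by apply: ln_gt0; apply: le_lt_trans T_gt; rewrite lerDl.
apply: (info_gain_le_sum_ln (phi := phi)) => // [i j|N]; first exact: mercer.
pose u m := L0 * sigma m * \sum_(i < T) phi m (zs i) ^+ 2.
have uE m : u m = L0 * \sum_(i < T) sigma m * phi m (zs i) ^+ 2.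
  by rewrite /u -mulrA mulr_sumr.
have u_ge0 m : 0 <= u m.
  by rewrite uE mulr_ge0 // sumr_ge0 // => i _; rewrite mulr_ge0 ?sqr_ge0.
have u_le m : u m <= L0 * T%:R.
  rewrite uE ler_wpM2l // -[T in T%:R]card_ord -sumr_const ler_sum // => i _.
  apply: le_trans (k_le1 (Zzs i)); apply: mercer_term_le_diag => //.
  exact: mercer.
have u_decay m :
    u m <= L0 * (Cp * B ^+ 2) * T%:R * rho `^ alpha * (m.+1)%:R `^ (- (q + 1)).
  have -> : L0 * (Cp * B ^+ 2) * T%:R * rho `^ alpha * (m.+1)%:R `^ (- (q + 1))
      = L0 * \sum_(i < T) Cp * B ^+ 2 * rho `^ alpha * (m.+1)%:R `^ (- (q + 1)).
    by rewrite sumr_const card_ord -mulr_natl; ring.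
  rewrite uE ler_wpM2l // ler_sum // => i _; rewrite -qP.
  exact: poly_eigendecay_term_le sigma_ge0 decay (Zzs i).
have ln1D_le m : ln (1 + u m) <= 2 * ln T%:R.
  apply: le_trans (ln1DM_le_twice_ln L0_ge0 (ltW T_gt)).
  by rewrite ler_ln ?posrE ?lerD2l ?u_le // ltr_pwDl // mulr_ge0 // ltW.
apply: (sum_ln1D_le_balanced q_gt0 u_ge0 u_decay N _ ln1D_le).
by rewrite mulr_gt0.
Qed.

End HypercubeKernel.

Theorem lemma2 (R : realType) (d : nat) (Cp alpha p eta B lambda : R) :
  (0 < d)%N -> 0 < Cp -> 0 < alpha -> 1 < p -> 0 <= eta ->
  1 < p * (1 - 2 * eta) -> 0 < lambda ->
  exists (C : R) (T0 : nat),
    forall (a : 'rV[R]_d) (rho : R) (k : 'rV[R]_d -> 'rV[R]_d -> R)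
           (sigma : nat -> R) (phi : nat -> 'rV[R]_d -> R),
      0 < rho ->
      pos_def_kernel (hypercube a rho) k ->
      kernel_continuous (hypercube a rho) k ->
      (forall z, hypercube a rho z -> k z z <= 1) ->
      mercer_pairs a rho k sigma phi ->
      poly_eigendecay a rho sigma phi Cp alpha p eta B ->
      forall T : nat, (T0 <= T)%N ->
        max_info_gain (hypercube a rho) k lambda T
        <= C * T%:R `^ (1 / (p * (1 - 2 * eta)))
             * (ln T%:R) `^ (1 - 1 / (p * (1 - 2 * eta)))
             * rho `^ (alpha / (p * (1 - 2 * eta))).
Proof.
move=> _ Cp_gt0 _ _ _ P_gt1 _.
set P := p * (1 - 2 * eta) in P_gt1 *.
set q := P - 1; have q_gt0 : 0 < q by rewrite subr_gt0.
have qP : P = q + 1 by rewrite subrK.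
set kappa := lambda ^- 2 * (Cp * B ^+ 2).
have kappa_ge0 : 0 <= kappa.
  by rewrite mulr_ge0 ?invr_ge0 ?sqr_ge0 // mulr_ge0 ?sqr_ge0 // ltW.
exists ((2 + q^-1) * kappa `^ (1 / P) * 2 `^ (1 - 1 / P) / 2),
       (Num.truncn (1 + lambda ^- 2)).+1.
move=> a rho k sigma phi _ _ _ k_le1 [[sigma_ge0 _] _ _ _ mercer] decay T T_ge.
have T_gt : 1 + lambda ^- 2 < T%:R.
  by apply: lt_le_trans (truncnS_gt _) _; rewrite ler_nat.
have lnT_ge0 : 0 <= ln (T%:R : R).
  by apply/ltW/ln_gt0; apply: le_lt_trans T_gt; rewrite lerDl invr_ge0 sqr_ge0.
apply: max_info_gain_le => [|zs Zzs].
  by rewrite !mulr_ge0 ?powR_ge0 // addr_ge0 // invr_ge0 ltW.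
apply: le_trans (info_gain_le_powR sigma_ge0 mercer k_le1 decay q_gt0 qP T_gt Zzs) _.
rewrite -qP -/kappa (powRM _ (mulr_ge0 kappa_ge0 (ler0n _ _)) (powR_ge0 _ _)).
rewrite (powRM _ kappa_ge0 (ler0n _ _)) (powRM _ (ler0n _ 2) lnT_ge0) -powRrM mul1r.
lra.
Qed.
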